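(* Let $\mathcal A\in\mathbb R^{n_1}\otimes\cdots\otimes\mathbb R^{n_k}$, $1\le s\le k$ and $r\le\min\{n_1,\dots,n_s\}$. Consider problem (LRPOTA): minimize $\|\mathcal A-(U^{(1)},\dots,U^{(k)})\cdot\mathcal D\|^2$ over $\mathcal D=\operatorname{diag}_k(\lambda_1,\dots,\lambda_r)$, $\lambda_j\in\mathbb R$, $(U^{(i)})^{\mathsf T}U^{(i)}=I_r$ for $i=1,\dots,s$, $U^{(i)}\in\mathrm B(r,n_i)$ for $i=s+1,\dots,k$; and problem (mLRPOTA): maximize $\sum_{j=1}^r\big(((U^{(1)})^{\mathsf T},\dots,(U^{(k)})^{\mathsf T})\cdot\mathcal A\big)_{j\cdots j}^2$ subject to the same constraints on $U=(U^{(1)},\dots,U^{(k)})$. Then: (i) if $(\widehat U,\widehat{\mathcal D})$ with $\widehat{\mathcal D}=\operatorname{diag}_k(\widehat\lambda_1,\dots,\widehat\lambda_r)$ is an optimizer of (LRPOTA), then $\widehat U$ is an optimizer of (mLRPOTA), and the optimal values are respectively $\|\mathcal A\|^2-\sum_j\widehat\lambda_j^2$ and $\sum_j\widehat\lambda_j^2$; (ii) conversely, if $\widehat U$ is an optimizer of (mLRPOTA), then $(\widehat U,\widehat{\mathcal D})$ with $\widehat{\mathcal D}=\operatorname{diag}_k\circ\operatorname{Diag}_k\big(((\widehat U^{(1)})^{\mathsf T},\dots,(\widehat U^{(k)})^{\mathsf T})\cdot\mathcal A\big)$ is an optimizer of (LRPOTA).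
   Context: $\mathrm B(r,n)$ is the set of $n\times r$ real matrices with unit-norm columns. For matrices $B^{(i)}\in\mathbb R^{m_i\times n_i}$ and a tensor $\mathcal A$, $(B^{(1)},\dots,B^{(k)})\cdot\mathcal A$ is the tensor with entries $\sum_{j_1,\dots,j_k}b^{(1)}_{i_1j_1}\cdots b^{(k)}_{i_kj_k}a_{j_1\dots j_k}$. $\operatorname{diag}_k(\lambda)\in(\mathbb R^r)^{\otimes k}$ is the diagonal tensor with diagonal entries $\lambda_1,\dots,\lambda_r$, and $\operatorname{Diag}_k$ extracts the diagonal $(a_{i\cdots i})_{i=1}^r$ of a tensor in $(\mathbb R^r)^{\otimes k}$. The norm is the Hilbert–Schmidt (Frobenius) norm. *)

From HB Require Import structures.
From mathcomp Require Import all_boot all_order all_algebra.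
From mathcomp Require Import reals.
Set Implicit Arguments. Unset Strict Implicit. Unset Printing Implicit Defensive.
Import Order.TTheory GRing.Theory Num.Theory.
Local Open Scope ring_scope.

Definition midx (k : nat) (n : 'I_k -> nat) := {dffun forall i : 'I_k, 'I_(n i)}.

Definition tensor (R : Type) (k : nat) (n : 'I_k -> nat) := midx n -> R.

Definition cdim (k r : nat) : 'I_k -> nat := fun _ => r.
Arguments cdim : clear implicits.

Definition mlmul (R : realType) (k : nat) (m n : 'I_k -> nat)
  (B : forall i : 'I_k, 'M[R]_(m i, n i)) (A : tensor R n) : tensor R m :=
  fun I => \sum_(J : midx n) (\prod_(i < k) B i (I i) (J i)) * A J.

Definition hsnorm2 (R : realType) (k : nat) (n : 'I_k -> nat) (A : tensor R n) : R :=
  \sum_(J : midx n) (A J) ^+ 2.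

Definition diagk (R : realType) (k r : nat) (lam : 'I_r -> R) : tensor R (cdim k r) :=
  fun I => \sum_(j < r) (if [forall i : 'I_k, (I i : nat) == j] then lam j else 0).

Definition cidx (k r : nat) (j : 'I_r) : midx (cdim k r) :=
  [ffun i : 'I_k => (j : 'I_(cdim k r i))].
Arguments cidx : clear implicits.

Definition Diagk (R : realType) (k r : nat) (A : tensor R (cdim k r)) : 'I_r -> R :=
  fun j => A (cidx k r j).

(* feasible set: U^(i)^T U^(i) = I_r for the first s factors (i < s, 0-based),
   unit-norm columns (U^(i) in B(r, n_i)) for the others *)
Definition feasible (R : realType) (k s r : nat) (n : 'I_k -> nat)
  (U : forall i : 'I_k, 'M[R]_(n i, r)) : Prop :=
  forall i : 'I_k,
    if (i < s)%N then (U i)^T *m U i = 1%:M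
    else forall j : 'I_r, \sum_(l < n i) (U i l j) ^+ 2 = 1.

Definition lrpota_obj (R : realType) (k r : nat) (n : 'I_k -> nat)
  (A : tensor R n) (U : forall i : 'I_k, 'M[R]_(n i, r)) (lam : 'I_r -> R) : R :=
  hsnorm2 (fun I => A I - mlmul (m := n) (n := cdim k r) U (@diagk R k r lam) I).

Definition mlrpota_obj (R : realType) (k r : nat) (n : 'I_k -> nat)
  (A : tensor R n) (U : forall i : 'I_k, 'M[R]_(n i, r)) : R :=
  \sum_(j < r) (mlmul (m := cdim k r) (n := n) (fun i => (U i)^T) A (cidx k r j)) ^+ 2.

Definition lrpota_optimizer (R : realType) (k s r : nat) (n : 'I_k -> nat)
  (A : tensor R n) (U : forall i : 'I_k, 'M[R]_(n i, r)) (lam : 'I_r -> R) : Prop :=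
  feasible s U /\
  forall (V : forall i : 'I_k, 'M[R]_(n i, r)) (mu : 'I_r -> R),
    feasible s V -> lrpota_obj A U lam <= lrpota_obj A V mu.

Definition mlrpota_optimizer (R : realType) (k s r : nat) (n : 'I_k -> nat)
  (A : tensor R n) (U : forall i : 'I_k, 'M[R]_(n i, r)) : Prop :=
  feasible s U /\
  forall V : forall i : 'I_k, 'M[R]_(n i, r),
    feasible s V -> mlrpota_obj A V <= mlrpota_obj A U.

From mathcomp Require Import all_boot all_order all_algebra.
From mathcomp Require Import reals ring.
Set Implicit Arguments. Unset Strict Implicit. Unset Printing Implicit Defensive.
Import Order.TTheory GRing.Theory Num.Theory.
Local Open Scope ring_scope.

(* For feasible U the columns satisfy <U_j, U_j'> = 1 in every mode and = 0 for
   j <> j' in the orthogonal modes, so the rank-one terms of (U).diag(lam) are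
   orthonormal: its squared norm is sum_j lam_j^2 and its inner product with A is
   sum_j lam_j c_j, where c = Diag((U^T).A).  Hence the LRPOTA objective equals
   ||A||^2 - sum_j c_j^2 + sum_j (lam_j - c_j)^2: for fixed U it is minimised
   exactly at lam = c, with value ||A||^2 minus the mLRPOTA objective. *)

Lemma big_midx_prod (R : comPzSemiRingType) (k : nat) (n : 'I_k -> nat)
    (F : forall i : 'I_k, 'I_(n i) -> R) :
  \sum_(J : midx n) \prod_(i < k) F i (J i) = \prod_(i < k) \sum_(l < n i) F i l.
Proof.
rewrite (reindex (@dffun_of_fprod _ (fun i => 'I_(n i)))); last first.
  exact/onW_bij/dffun_of_fprod_bij.
transitivity (\sum_(t : fprod (fun i : 'I_k => 'I_(n i)))
                \prod_(i in 'I_k) [ffun l => F i l] (t i)).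
  by apply: eq_bigr => t _; apply: eq_bigr => i _; rewrite !ffunE.
rewrite big_fprod.
transitivity (\prod_(i < k) \sum_(x in tagged_with (fun i : 'I_k => 'I_(n i)) i)
                untag 0 [ffun l => F i l] x).
  by rewrite bigA_distr_big_dep.
apply: eq_bigr => i _.
rewrite -(big_tag (op := +%R) (fun i l => [ffun l => F i l] l)).
by apply: eq_bigr => l _; rewrite ffunE.
Qed.

Lemma forall_eq_cidx (k r : nat) (J : midx (cdim k r)) (j : 'I_r) :
  [forall i : 'I_k, (J i : nat) == j] = (J == cidx k r j).
Proof.
apply/forallP/eqP => [eqJ | -> i]; last by rewrite ffunE.
by apply/ffunP => i; rewrite ffunE; apply/val_inj/eqP/eqJ.
Qed.

Section DiagonalApproximation.

Variables (R : realType) (k r : nat) (n : 'I_k -> nat).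
Implicit Types (A B : tensor R n) (U : forall i : 'I_k, 'M[R]_(n i, r))
  (lam : 'I_r -> R).

Definition hsdot A B : R := \sum_(J : midx n) A J * B J.

Lemma hsnorm2B A B :
  hsnorm2 (fun J => A J - B J) = hsnorm2 A - 2 * hsdot A B + hsnorm2 B.
Proof.
rewrite /hsnorm2 /hsdot mulr_sumr -sumrB -big_split /=.
by apply: eq_bigr => J _; ring.
Qed.

Definition diag_coefs A U : 'I_r -> R :=
  Diagk (mlmul (m := cdim k r) (n := n) (fun i => (U i)^T) A).

Lemma diag_coefsE A U j :
  diag_coefs A U j = \sum_(J : midx n) A J * \prod_(i < k) U i (J i) j.
Proof.
apply: eq_bigr => J _; rewrite mulrC; congr (_ * _).
by apply: eq_bigr => i _; rewrite mxE ffunE.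
Qed.

Lemma mlmul_diagkE U lam (I : midx n) :
  mlmul (m := n) (n := cdim k r) U (diagk lam) I =
  \sum_(j < r) lam j * \prod_(i < k) U i (I i) j.
Proof.
rewrite /mlmul /diagk; under eq_bigr do rewrite mulr_sumr.
rewrite exchange_big; apply: eq_bigr => j _.
rewrite (bigD1 (cidx k r j)) //= [X in _ + X]big1 => [|J /negbTE neqJ];
  last by rewrite forall_eq_cidx neqJ mulr0.
rewrite forall_eq_cidx eqxx addr0 mulrC; congr (_ * _).
by apply: eq_bigr => i _; rewrite ffunE.
Qed.

Lemma hsdot_mlmul_diagk A U lam :
  hsdot A (mlmul (m := n) (n := cdim k r) U (diagk lam)) =
  \sum_(j < r) lam j * diag_coefs A U j.
Proof.
rewrite /hsdot; under eq_bigr do rewrite mlmul_diagkE mulr_sumr.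
rewrite exchange_big; apply: eq_bigr => j _.
by rewrite diag_coefsE mulr_sumr; apply: eq_bigr => J _; ring.
Qed.

Variable s : nat.
Hypotheses (s_gt0 : (0 < s)%N) (s_le_k : (s <= k)%N).

Lemma feasible_col_dot U (i : 'I_k) j j' : feasible s U -> (i < s)%N ->
  \sum_(l < n i) U i l j * U i l j' = (j == j')%:R.
Proof.
move=> /(_ i) + i_lt_s; rewrite i_lt_s => /(congr1 (fun M : 'M[R]_r => M j j')).
by rewrite !mxE => <-; apply: eq_bigr => l _; rewrite mxE.
Qed.

Lemma feasible_col_norm U (i : 'I_k) j : feasible s U ->
  \sum_(l < n i) U i l j * U i l j = 1.
Proof.
move=> fU; case: (ltnP i s) => [i_lt_s | s_le_i].
  by rewrite feasible_col_dot // eqxx.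
have := fU i; rewrite ltnNge s_le_i /= => /(_ j) <-.
by apply: eq_bigr => l _; rewrite expr2.
Qed.

(* Off the diagonal, the factor of the first (orthogonal) mode vanishes. *)
Lemma feasible_gram_prod U j j' : feasible s U ->
  \prod_(i < k) \sum_(l < n i) U i l j * U i l j' = (j == j')%:R.
Proof.
move=> fU; have [<- | neq_jj'] := eqVneq j j'.
  by rewrite big1 // => i _; rewrite feasible_col_norm.
rewrite (bigD1 (Ordinal (leq_trans s_gt0 s_le_k))) //=.
by rewrite feasible_col_dot // (negbTE neq_jj') mul0r.
Qed.

Lemma hsnorm2_mlmul_diagk U lam : feasible s U ->
  hsnorm2 (mlmul (m := n) (n := cdim k r) U (diagk lam)) =
  \sum_(j < r) lam j ^+ 2.
Proof.
move=> fU; rewrite /hsnorm2.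
under eq_bigr do rewrite mlmul_diagkE expr2 mulr_suml; rewrite exchange_big.
apply: eq_bigr => j _; under eq_bigr do rewrite mulr_sumr; rewrite exchange_big.
transitivity (\sum_(j' < r) lam j * lam j' * (j == j')%:R).
  apply: eq_bigr => j' _.
  rewrite -(feasible_gram_prod j j' fU) -big_midx_prod mulr_sumr.
  by apply: eq_bigr => J _; rewrite big_split /=; ring.
rewrite (bigD1 j) //= eqxx mulr1 expr2 big1 ?addr0 // => j' neq_j'j.
by rewrite eq_sym (negbTE neq_j'j) mulr0.
Qed.

Lemma lrpota_objE A U lam : feasible s U ->
  lrpota_obj A U lam =
  hsnorm2 A - mlrpota_obj A U + \sum_(j < r) (lam j - diag_coefs A U j) ^+ 2.
Proof.
move=> fU; rewrite /lrpota_obj hsnorm2B hsdot_mlmul_diagk hsnorm2_mlmul_diagk //.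
rewrite -!addrA; congr (_ + _).
rewrite /mlrpota_obj mulr_sumr -!sumrN -!big_split /=.
by apply: eq_bigr => j _; rewrite /diag_coefs /Diagk; ring.
Qed.

Lemma lrpota_obj_diag_coefs A U : feasible s U ->
  lrpota_obj A U (diag_coefs A U) = hsnorm2 A - mlrpota_obj A U.
Proof.
by move=> fU; rewrite lrpota_objE // big1 ?addr0 // => j _; rewrite subrr expr0n.
Qed.

Lemma lrpota_obj_ge A U lam : feasible s U ->
  hsnorm2 A - mlrpota_obj A U <= lrpota_obj A U lam.
Proof.
move=> fU; rewrite lrpota_objE // lerDl.
by apply: sumr_ge0 => j _; apply: sqr_ge0.
Qed.

Lemma lrpota_obj_le_coefs A U lam : feasible s U ->
  lrpota_obj A U lam <= hsnorm2 A - mlrpota_obj A U -> lam =1 diag_coefs A U.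
Proof.
move=> fU; rewrite lrpota_objE // gerDl => sum_le0 j.
have /eqP : \sum_(j < r) (lam j - diag_coefs A U j) ^+ 2 = 0.
  by apply/eqP; rewrite eq_le sum_le0 sumr_ge0 // => i _; apply: sqr_ge0.
rewrite psumr_eq0 => [/allP/(_ j (mem_index_enum j))|i _]; last exact: sqr_ge0.
by rewrite sqrf_eq0 subr_eq0 => /eqP.
Qed.

End DiagonalApproximation.

Theorem proposition3p5 (R : realType) (k s r : nat) (n : 'I_k -> nat)
  (A : tensor R n) :
  (1 <= s <= k)%N ->
  (forall i : 'I_k, (i < s)%N -> (r <= n i)%N) ->
  (forall (U : forall i : 'I_k, 'M[R]_(n i, r)) (lam : 'I_r -> R),
     lrpota_optimizer s A U lam ->
     [/\ mlrpota_optimizer s A U,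
         lrpota_obj A U lam = hsnorm2 A - \sum_(j < r) lam j ^+ 2
       & mlrpota_obj A U = \sum_(j < r) lam j ^+ 2]) /\
  (forall U : forall i : 'I_k, 'M[R]_(n i, r),
     mlrpota_optimizer s A U ->
     lrpota_optimizer s A U
       (Diagk (mlmul (m := cdim k r) (n := n) (fun i => (U i)^T) A))).
Proof.
(* [r <= n i] only makes the feasible set nonempty; neither part needs it. *)
move=> /andP[s_gt0 s_le_k] _.
have objc (V : forall i, 'M[R]_(n i, r)) : feasible s V ->
    lrpota_obj A V (diag_coefs A V) = hsnorm2 A - mlrpota_obj A V.
  exact: lrpota_obj_diag_coefs.
have obj_ge (V : forall i, 'M[R]_(n i, r)) mu : feasible s V ->
    hsnorm2 A - mlrpota_obj A V <= lrpota_obj A V mu.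
  exact: lrpota_obj_ge.
split=> [U lam [fU optU] | U [fU optU]].
  have obj_le : lrpota_obj A U lam <= hsnorm2 A - mlrpota_obj A U.
    by rewrite -objc // optU.
  have lamE := lrpota_obj_le_coefs s_gt0 s_le_k fU obj_le.
  have objU : lrpota_obj A U lam = hsnorm2 A - mlrpota_obj A U.
    by apply/eqP; rewrite eq_le obj_le obj_ge.
  have mobjU : mlrpota_obj A U = \sum_(j < r) lam j ^+ 2.
    by apply: eq_bigr => j _; rewrite lamE.
  split=> //; last by rewrite objU mobjU.
  split=> // V fV; have := optU V (diag_coefs A V) fV.
  by rewrite objU objc // lerD2l lerN2.
split=> // V mu fV; rewrite objc //; apply: le_trans (obj_ge V mu fV).
by rewrite lerD2l lerN2 optU.
Qed.
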